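(* Let $(D,\prec,\succ,d)$ be a differential dendriform algebra of weight zero. Define, for $a,b\in D$, $$a\searrow b:=d(a)\succ b,\quad a\nearrow b:=a\succ d(b),\quad a\swarrow b:=d(a)\prec b,\quad a\nwarrow b:=a\prec d(b).$$ Then $(D,\searrow,\nearrow,\swarrow,\nwarrow)$ is a Novikov-dendriform algebra. Moreover, with $$a\vdash b:=a\searrow b+a\swarrow b=d(a)\succ b+d(a)\prec b,\qquad a\dashv b:=a\nearrow b+a\nwarrow b=a\succ d(b)+a\prec d(b),$$ the triple $(D,\vdash,\dashv)$ is a Novikov-associative algebra.
   Context: $\mathbf{k}$ is a commutative unital ring. A dendriform algebra is a $\mathbf{k}$-module $D$ with bilinear operations $\prec,\succ$ such that for all $a,b,c\in D$: $(a\prec b)\prec c=a\prec(b\prec c+b\succ c)$, $(a\succ b)\prec c=a\succ(b\prec c)$, $(a\prec b+a\succ b)\succ c=a\succ(b\succ c)$. A derivation of weight $\lambda$ on it is a linear map $d$ with $d(a\prec b)=d(a)\prec b+a\prec d(b)+\lambda d(a)\prec d(b)$ and $d(a\succ b)=d(a)\succ b+a\succ d(b)+\lambda d(a)\succ d(b)$ for all $a,b$; then $(D,\prec,\succ,d)$ is a differential dendriform algebra of weight $\lambda$. A Novikov-dendriform algebra is a $\mathbf{k}$-module $N$ with four bilinear operations $\searrow,\nearrow,\swarrow,\nwarrow$ such that for all $a,b,c\in N$: (i) $(a\swarrow b)\nwarrow c=a\swarrow(b\nearrow c+b\nwarrow c)$; (ii) $(a\searrow b)\nwarrow c=a\searrow(b\nwarrow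 c)$; (iii) $(a\searrow b+a\swarrow b)\nearrow c=a\searrow(b\nearrow c)$; (iv) $(a\nwarrow b)\nwarrow c-a\nwarrow(b\searrow c+b\swarrow c)=a\swarrow(b\searrow c+b\swarrow c)-(a\nwarrow b)\swarrow c$; (v) $(a\nearrow b)\nwarrow c-a\nearrow(b\swarrow c)=a\searrow(b\swarrow c)-(a\nearrow b)\swarrow c$; (vi) $(a\nearrow b+a\nwarrow b)\nearrow c-a\nearrow(b\searrow c)=a\searrow(b\searrow c)-(a\nearrow b+a\nwarrow b)\searrow c$. A Novikov-associative algebra is a $\mathbf{k}$-module $A$ with bilinear operations $\vdash,\dashv$ such that for all $a,b,c$: $(a\vdash b)\dashv c=a\vdash(b\dashv c)$ and $(a\dashv b)\dashv c-a\dashv(b\vdash c)=a\vdash(b\vdash c)-(a\dashv b)\vdash c$. *)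

From mathcomp Require Import all_boot all_algebra.
Set Implicit Arguments. Unset Strict Implicit. Unset Printing Implicit Defensive.
Import GRing.Theory.
Local Open Scope ring_scope.

Definition bilinear_op (k : comPzRingType) (D : lmodType k) (op : D -> D -> D) : Prop :=
  (forall c a a' b, op (c *: a + a') b = c *: op a b + op a' b) /\
  (forall c a b b', op a (c *: b + b') = c *: op a b + op a b').

Definition dendriform (k : comPzRingType) (D : lmodType k) (pl pr : D -> D -> D) : Prop :=
  bilinear_op pl /\ bilinear_op pr /\
  (forall a b c, pl (pl a b) c = pl a (pl b c + pr b c)) /\
  (forall a b c, pl (pr a b) c = pr a (pl b c)) /\
  (forall a b c, pr (pl a b + pr a b) c = pr a (pr b c)).

Definition dend_derivation (k : comPzRingType) (D : lmodType k) (lam : k)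
    (pl pr : D -> D -> D) (d : {linear D -> D}) : Prop :=
  (forall a b, d (pl a b) = pl (d a) b + pl a (d b) + lam *: pl (d a) (d b)) /\
  (forall a b, d (pr a b) = pr (d a) b + pr a (d b) + lam *: pr (d a) (d b)).

Definition differential_dendriform (k : comPzRingType) (D : lmodType k) (lam : k)
    (pl pr : D -> D -> D) (d : {linear D -> D}) : Prop :=
  dendriform pl pr /\ dend_derivation lam pl pr d.

(* se = searrow, ne = nearrow, sw = swarrow, nw = nwarrow *)
Definition novikov_dendriform (k : comPzRingType) (D : lmodType k)
    (se ne sw nw : D -> D -> D) : Prop :=
  bilinear_op se /\ bilinear_op ne /\ bilinear_op sw /\ bilinear_op nw /\
  (forall a b c, nw (sw a b) c = sw a (ne b c + nw b c)) /\
  (forall a b c, nw (se a b) c = se a (nw b c)) /\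
  (forall a b c, ne (se a b + sw a b) c = se a (ne b c)) /\
  (forall a b c, nw (nw a b) c - nw a (se b c + sw b c)
                 = sw a (se b c + sw b c) - sw (nw a b) c) /\
  (forall a b c, nw (ne a b) c - ne a (sw b c) = se a (sw b c) - sw (ne a b) c) /\
  (forall a b c, ne (ne a b + nw a b) c - ne a (se b c)
                 = se a (se b c) - se (ne a b + nw a b) c).

(* vd = vdash, da = dashv *)
Definition novikov_associative (k : comPzRingType) (D : lmodType k)
    (vd da : D -> D -> D) : Prop :=
  bilinear_op vd /\ bilinear_op da /\
  (forall a b c, da (vd a b) c = vd a (da b c)) /\
  (forall a b c, da (da a b) c - da a (vd b c) = vd a (vd b c) - vd (da a b) c).

From mathcomp Require Import all_boot all_algebra.
Set Implicit Arguments. Unset Strict Implicit. Unset Printing Implicit Defensive.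
Import GRing.Theory.
Local Open Scope ring_scope.

(* For a derivation of weight zero, each of the four new products moves d
   onto one factor of ≺ or ≻, so axioms (i)-(iii) are the dendriform axioms
   themselves.  In (iv)-(vi) the Leibniz rule (also valid for the associative
   product x ∗ y = x ≺ y + x ≻ y) expands d of a product, and the dendriform
   axioms collapse both sides to the same term, e.g. -(a ≺ (d (d b) ∗ c)) in
   (iv).  The Novikov-associative structure exists on every
   Novikov-dendriform algebra: ⊢ = ↘ + ↙ and ⊣ = ↗ + ↖ satisfy the first
   axiom by (i)-(iii), and the second is the sum of (iv), (v) and (vi). *)

Section BilinearOp.
Variables (k : comPzRingType) (D : lmodType k).
Implicit Types op : D -> D -> D.

Lemma bilinear_opDl op :
  bilinear_op op -> forall a a' b, op (a + a') b = op a b + op a' b.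
Proof. by move=> [opl _] a a' b; have := opl 1 a a' b; rewrite !scale1r. Qed.

Lemma bilinear_opDr op :
  bilinear_op op -> forall a b b', op a (b + b') = op a b + op a b'.
Proof. by move=> [_ opr] a b b'; have := opr 1 a b b'; rewrite !scale1r. Qed.

Lemma bilinear_opD op1 op2 : bilinear_op op1 -> bilinear_op op2 ->
  bilinear_op (fun a b => op1 a b + op2 a b).
Proof.
move=> [op1l op1r] [op2l op2r].
by split=> *; rewrite ?op1l ?op1r ?op2l ?op2r scalerDr addrACA.
Qed.

Lemma bilinear_op_linl op (f : {linear D -> D}) : bilinear_op op ->
  bilinear_op (fun a b => op (f a) b).
Proof. by move=> [opl opr]; split=> *; rewrite ?linearP ?opl ?opr. Qed.

Lemma bilinear_op_linr op (f : {linear D -> D}) : bilinear_op op ->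
  bilinear_op (fun a b => op a (f b)).
Proof. by move=> [opl opr]; split=> *; rewrite ?linearP ?opl ?opr. Qed.

End BilinearOp.

Lemma novikov_dendriform_associative (k : comPzRingType) (D : lmodType k)
    (se ne sw nw : D -> D -> D) :
  novikov_dendriform se ne sw nw ->
  novikov_associative (fun a b => se a b + sw a b) (fun a b => ne a b + nw a b).
Proof.
move=> [seB [neB [swB [nwB [ax1 [ax2 [ax3 [ax4 [ax5 ax6]]]]]]]]].
split; [exact: bilinear_opD | split; [exact: bilinear_opD | split]] => a b c.
  by rewrite ax3 (bilinear_opDl nwB) ax2 ax1 addrA -(bilinear_opDr seB).
transitivity ((ne (ne a b + nw a b) c - ne a (se b c))
              + (nw (ne a b) c - ne a (sw b c))
              + (nw (nw a b) c - nw a (se b c + sw b c))).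
  rewrite (bilinear_opDl nwB) (bilinear_opDr neB) !opprD !addrA.
  by rewrite (ACl (1*4*2*5*3*6)).
rewrite ax4 ax5 ax6 (bilinear_opDr seB) (bilinear_opDl swB) !opprD !addrA.
by rewrite (ACl (1*3*5*2*4*6)).
Qed.

Section WeightZeroDifferentialDendriform.
Variables (k : comPzRingType) (D : lmodType k) (pl pr : D -> D -> D).
Variable d : {linear D -> D}.
Hypotheses (pl_bilinear : bilinear_op pl) (pr_bilinear : bilinear_op pr).
Hypothesis pl_plA : forall a b c, pl (pl a b) c = pl a (pl b c + pr b c).
Hypothesis pr_plA : forall a b c, pl (pr a b) c = pr a (pl b c).
Hypothesis pr_prA : forall a b c, pr (pl a b + pr a b) c = pr a (pr b c).
Hypothesis d_pl : forall a b, d (pl a b) = pl (d a) b + pl a (d b).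
Hypothesis d_pr : forall a b, d (pr a b) = pr (d a) b + pr a (d b).

Let plDl := bilinear_opDl pl_bilinear.
Let plDr := bilinear_opDr pl_bilinear.
Let prDl := bilinear_opDl pr_bilinear.
Let prDr := bilinear_opDr pr_bilinear.

Local Notation mul a b := (pl a b + pr a b).

Let d_mul a b : d (mul a b) = mul (d a) b + mul a (d b).
Proof. by rewrite linearD d_pl d_pr addrACA. Qed.

Lemma derivation_novikov_iv a b c :
  pl (pl a (d b)) (d c) - pl a (d (pr (d b) c + pl (d b) c))
  = pl (d a) (pr (d b) c + pl (d b) c) - pl (d (pl a (d b))) c.
Proof.
rewrite [pr _ c + _]addrC d_mul plDr d_pl plDl !pl_plA.
by rewrite !opprD addrCA subrr addr0 addrA subrr add0r.
Qed.

Lemma derivation_novikov_v a b c :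
  pl (pr a (d b)) (d c) - pr a (d (pl (d b) c))
  = pr (d a) (pl (d b) c) - pl (d (pr a (d b))) c.
Proof.
rewrite d_pl prDr d_pr plDl !pr_plA.
by rewrite !opprD addrCA subrr addr0 addrA subrr add0r.
Qed.

Lemma derivation_novikov_vi a b c :
  pr (pr a (d b) + pl a (d b)) (d c) - pr a (d (pr (d b) c))
  = pr (d a) (pr (d b) c) - pr (d (pr a (d b) + pl a (d b))) c.
Proof.
rewrite [pr a _ + _]addrC d_pr prDr d_mul prDl !pr_prA.
by rewrite !opprD addrCA subrr addr0 addrA subrr add0r.
Qed.

Lemma derivation_novikov_dendriform :
  novikov_dendriform (fun a b => pr (d a) b) (fun a b => pr a (d b))
                     (fun a b => pl (d a) b) (fun a b => pl a (d b)).
Proof.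
do 4 (split; first by [apply: bilinear_op_linl | apply: bilinear_op_linr]).
split; first by move=> a b c; rewrite pl_plA addrC.
split; first by move=> a b c; rewrite pr_plA.
split; first by move=> a b c; rewrite addrC pr_prA.
split; [exact: derivation_novikov_iv | split; [exact: derivation_novikov_v |]].
exact: derivation_novikov_vi.
Qed.

End WeightZeroDifferentialDendriform.

Theorem proposition3p12 (k : comPzRingType) (D : lmodType k)
    (pl pr : D -> D -> D) (d : {linear D -> D}) :
  differential_dendriform 0 pl pr d ->
  novikov_dendriform (fun a b => pr (d a) b) (fun a b => pr a (d b))
                     (fun a b => pl (d a) b) (fun a b => pl a (d b)) /\
  novikov_associative (fun a b => pr (d a) b + pl (d a) b)
                      (fun a b => pr a (d b) + pl a (d b)).
Proof.
move=> [[plB [prB [pl_plA [pr_plA pr_prA]]]] [d_pl d_pr]].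
have d_pl0 a b : d (pl a b) = pl (d a) b + pl a (d b).
  by rewrite d_pl scale0r addr0.
have d_pr0 a b : d (pr a b) = pr (d a) b + pr a (d b).
  by rewrite d_pr scale0r addr0.
have ND := derivation_novikov_dendriform plB prB pl_plA pr_plA pr_prA d_pl0 d_pr0.
by split; last exact: novikov_dendriform_associative.
Qed.
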